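(* Let $\mathbf{S}=(S_n)_{n\in\mathbb{N}}$ be a stationary ergodic information source with finite alphabet $A=\{1,\ldots,N\}$ (ordered by the usual order of integers), and let $R_n=\sum_{i=1}^{n}\delta(S_i\le S_n)$ be its rank variables. Then for every $l\ge 1$, \[ \lim_{k\to\infty} H_m\big(R_{k+1}^{k+l}\,\big|\,S_1^{k}\big)=\lim_{k\to\infty} H_m\big(S_{k+1}^{k+l}\,\big|\,S_1^{k}\big). \]
   Context: A finite-alphabet information source is a discrete-time stochastic process $\mathbf{S}=(S_n)_{n\in\mathbb{N}}$ of random variables with values in a finite alphabet $A$; it is stationary and ergodic if its sequence-space model $(A^{\mathbb{N}},\mathcal{Z},m,\sigma)$ (with $m$ the induced shift-invariant distribution on output sequences and $\sigma$ the left shift) is stationary and ergodic. For a proposition $P$, $\delta(P)=1$ if $P$ holds and $0$ otherwise. The rank variable $R_n=\sum_{i=1}^n\delta(S_i\le S_n)$ takes values in $\{1,\ldots,n\}$. For indices $i\le j$, $S_i^j$ denotes the word $S_i S_{i+1}\cdots S_j$, and similarly $R_i^j$. $H_m(\cdot\mid\cdot)$ denotes Shannon conditional entropy (logarithm base 2) computed with respect to the joint distribution of the process. *)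

From HB Require Import structures.
From mathcomp Require Import all_boot all_order all_algebra.
From mathcomp Require Import all_classical all_reals all_analysis.
Set Implicit Arguments. Unset Strict Implicit. Unset Printing Implicit Defensive.
Import Order.TTheory GRing.Theory Num.Theory.
Local Open Scope classical_set_scope.
Local Open Scope ring_scope.

(* Conventions: the alphabet A = {1,..,N} is represented by 'I_N = {0,..,N-1}
   (order-preserving shift).  The process S_1, S_2, ... is represented by
   X : nat -> T -> 'I_N with X i = S_{i+1} (0-based indexing). *)

Section Source.
Variables (d : measure_display) (T : measurableType d) (R : realType).
Variable (P : probability T R).
Variable (N : nat).
Implicit Types (X : nat -> T -> 'I_N).

(* word X_k ... X_{k+n-1}, i.e. S_{k+1}^{k+n} *)
Definition word X (k n : nat) (w : T) : n.-tuple 'I_N :=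
  [tuple X (k + i) w | i < n].

Definition is_source X : Prop :=
  forall n (a : 'I_N), measurable [set w | X n w = a].

Definition stationary X : Prop :=
  forall (k n : nat) (v : n.-tuple 'I_N),
    P [set w | word X k n w = v] = P [set w | word X 0 n w = v].

Definition cylinders : set_system (nat -> 'I_N) :=
  [set C | exists n (v : n.-tuple 'I_N),
     C = [set x : nat -> 'I_N | mktuple (fun i : 'I_n => x (nat_of_ord i)) = v]].

Definition shift (x : nat -> 'I_N) : nat -> 'I_N := fun n => x n.+1.

(* ergodicity of the sequence-space model (A^N, Z, m, shift) where m is
   the law of the path w |-> (X n w)_n *)
Definition ergodic X : Prop :=
  forall B : set (nat -> 'I_N), <<s cylinders >> B ->
    shift @^-1` B = B ->
    P [set w | B (fun n => X n w)] = 0%E \/ P [set w | B (fun n => X n w)] = 1%E.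

Definition pr (E : set T) : R := fine (P E).

Definition log2 (x : R) : R := ln x / ln 2.

Definition condH (U V : finType) (Y : T -> U) (Z : T -> V) : R :=
  - \sum_(u : U) \sum_(v : V)
      (let pj := pr [set w | Y w = u /\ Z w = v] in
       let pz := pr [set w | Z w = v] in
       if pj == 0 then 0 else pj * log2 (pj / pz)).

(* rank variable R_n = sum_{i=1}^n delta(S_i <= S_n) for n >= 1 *)
Definition rank X (n : nat) (w : T) : nat :=
  \sum_(i < n) ((X i w <= X n.-1 w)%N : nat).

(* the word R_{k+1}^{k+l}; each R_m (m <= k+l) takes values in {1..k+l},
   stored in 'I_(k+l).+1 without loss *)
Definition rank_word X (k l : nat) (w : T) : l.-tuple 'I_(k + l).+1 :=
  [tuple (inord (rank X (k + i).+1 w) : 'I_(k + l).+1) | i < l].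

End Source.

From Pilot Require Import Defs.
From HB Require Import structures.
From mathcomp Require Import all_boot all_order all_algebra.
From mathcomp Require Import all_classical all_reals all_analysis.
From mathcomp Require Import ring lra.
Import Order.TTheory GRing.Theory Num.Theory.
Import numFieldNormedType.Exports.
Set Implicit Arguments. Unset Strict Implicit. Unset Printing Implicit Defensive.
Local Open Scope classical_set_scope.
Local Open Scope ring_scope.

(* The sequence H(S_{k+1}^{k+l} | S_1^k) is nonincreasing: conditioning on
   S_1^{k+1} gives less entropy than conditioning on S_2^{k+1} only, and by
   stationarity the latter equals H(S_{k+1}^{k+l} | S_1^k).  Being nonnegative,
   it converges.
   The rank word R_{k+1}^{k+l} is a function of S_{k+1}^{k+l} and S_1^k which
   is injective in S_{k+1}^{k+l} on the event that none of its letters occurs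
   for the first time: a letter that was already seen is determined by its rank
   among the letters seen so far.  A Fano-type estimate bounds the entropy lost
   by such a map by a function of the probability e of the bad event that
   vanishes as e -> 0.  By stationarity the probability that S_t is a new letter
   is nonincreasing in t, and a word has at most N new letters, so this
   probability is at most N / t and e <= l N / (k + 1). *)

Section FiniteRandomVariables.
Context (d : measure_display) (T : measurableType d) (R : realType)
  (P : probability T R).
Local Notation pr := (pr P).

Definition finrv (U : finType) (Y : T -> U) :=
  forall u, measurable [set w | Y w = u].

Lemma prE A : measurable A -> P A = (pr A)%:E.
Proof.
move=> mA; rewrite /Defs.pr fineK // ge0_fin_numE //.
exact: le_lt_trans (probability_le1 P mA) (ltey _).
Qed.

Lemma pr_ge0 A : 0 <= pr A.
Proof. exact: fine_ge0. Qed.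

Lemma pr_le A B : measurable A -> measurable B -> A `<=` B -> pr A <= pr B.
Proof.
by move=> mA mB AB; rewrite -lee_fin -!prE //; apply: le_measure; rewrite ?inE.
Qed.

Lemma pr_setT : pr setT = 1.
Proof. by rewrite /Defs.pr probability_setT. Qed.

Section OneVariable.
Context (U : finType) (Y : T -> U).
Hypothesis mY : finrv Y.

Lemma finrv_mem (s : seq U) : measurable [set w | Y w \in s].
Proof.
elim: s => [|u s IHs].
  by rewrite (_ : [set w | _] = set0) //; apply/seteqP; split.
rewrite (_ : [set w | _] = [set w | Y w = u] `|` [set w | Y w \in s]).
  exact: measurableU.
apply/seteqP; split => w /=; rewrite inE; first by case/orP => [/eqP|]; [left|right].
by case=> ->; rewrite ?eqxx ?orbT.
Qed.

Lemma finrv_preimage (Q : pred U) : measurable [set w | Q (Y w)].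
Proof.
rewrite (_ : [set w | _] = [set w | Y w \in enum Q]).
  exact: finrv_mem.
by apply/seteqP; split => w /=; rewrite mem_enum.
Qed.

Lemma prI_mem_sum B (s : seq U) : measurable B -> uniq s ->
  pr (B `&` [set w | Y w \in s]) = \sum_(u <- s) pr (B `&` [set w | Y w = u]).
Proof.
move=> mB; elim: s => [_|u s IHs /= /andP[us /IHs sumE]].
  rewrite big_nil [_ `&` _](_ : _ = set0) ?/Defs.pr ?measure0 //.
  by apply/seteqP; split => w [].
have mBu : measurable (B `&` [set w | Y w = u]) by exact: measurableI.
have mBs : measurable (B `&` [set w | Y w \in s]).
  by apply: measurableI => //; exact: finrv_mem.
have -> : B `&` [set w | Y w \in u :: s] =
    (B `&` [set w | Y w = u]) `|` (B `&` [set w | Y w \in s]).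
  apply/seteqP; split => w /=; rewrite inE.
    by move=> [Bw /orP[/eqP|]]; [left|right].
  by move=> [[Bw ->]|[Bw ->]]; rewrite ?eqxx ?orbT.
rewrite big_cons -sumE; apply/eqP; rewrite -eqe EFinD -!prE ?measureU //.
  by apply/seteqP; split => w //= [[_ ->] [_]]; rewrite (negbTE us).
exact: measurableU.
Qed.

Lemma prI_preimage_sum B (Q : pred U) : measurable B ->
  pr (B `&` [set w | Q (Y w)]) = \sum_(u | Q u) pr (B `&` [set w | Y w = u]).
Proof.
move=> mB; rewrite -big_filter -prI_mem_sum ?filter_uniq ?index_enum_uniq //.
by congr pr; apply/seteqP; split => w /= [Bw]; rewrite mem_filter mem_index_enum andbT.
Qed.

Lemma pr_preimage_sum (Q : pred U) :
  pr [set w | Q (Y w)] = \sum_(u | Q u) pr [set w | Y w = u].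
Proof.
have := prI_preimage_sum Q (@measurableT _ T); rewrite setTI => ->.
by apply: eq_bigr => u _; rewrite setTI.
Qed.

Lemma sum_pr_finrv : \sum_u pr [set w | Y w = u] = 1.
Proof.
rewrite -(pr_preimage_sum predT) -pr_setT.
by congr pr; apply/seteqP; split.
Qed.

Lemma sum_pr_preimage_le (I : finType) (Q : I -> pred U) (c : nat) :
  (forall u, #|[pred i | Q i u]| <= c)%N ->
  \sum_i pr [set w | Q i (Y w)] <= c%:R.
Proof.
move=> Qc; under eq_bigr do rewrite pr_preimage_sum.
rewrite (exchange_big_dep predT) //=.
apply: (@le_trans _ _ (\sum_u pr [set w | Y w = u] * c%:R)).
  apply: ler_sum => u _; rewrite sumr_const -[X in X <= _]mulr_natr.
  by rewrite ler_wpM2l ?pr_ge0 ?ler_nat ?Qc.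
by rewrite -mulr_suml sum_pr_finrv mul1r.
Qed.

End OneVariable.

Lemma finrv_pair (U V : finType) (Y : T -> U) (Z : T -> V) :
  finrv Y -> finrv Z -> finrv (fun w => (Y w, Z w)).
Proof.
move=> mY mZ [u v].
rewrite (_ : [set w | _] = [set w | Y w = u] `&` [set w | Z w = v]).
  exact: measurableI.
by apply/seteqP; split => w /= [-> ->].
Qed.

Lemma finrv_comp (U V : finType) (Y : T -> U) (f : U -> V) :
  finrv Y -> finrv (f \o Y).
Proof.
move=> mY v; rewrite (_ : [set w | _] = [set w | f (Y w) == v]).
  exact: (finrv_preimage mY (fun u => f u == v)).
by apply/seteqP; split => w /= /eqP.
Qed.

End FiniteRandomVariables.

Section ConditionalEntropy.
Context (R : realType).

Lemma ln_le_subr1 (x : R) : 0 < x -> ln x <= x - 1.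
Proof.
by move=> x0; have := @le_ln1Dx R (x - 1); rewrite [1 + _]addrC subrK; apply; lra.
Qed.

Lemma mul_ln_div_le (a b : R) : 0 <= a -> 0 <= b -> (0 < a -> 0 < b) ->
  a * ln (b / a) <= b - a.
Proof.
rewrite le_eqVlt => /orP[/eqP <-|a0] b0 ab; first by rewrite mul0r subr0.
have := ln_le_subr1 (divr_gt0 (ab a0) a0).
by rewrite -(ler_pM2l a0) mulrBr mulr1 mulrCA mulfV ?gt_eqF // mulr1.
Qed.

Lemma mul_lnV_le_sqrt (x : R) : 0 <= x -> x * ln x^-1 <= 2 * Num.sqrt x.
Proof.
rewrite le_eqVlt => /orP[/eqP <-|x0]; first by rewrite mul0r sqrtr0 mulr0.
set s := Num.sqrt x; have s0 : 0 < s by rewrite sqrtr_gt0.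
have -> : x * ln x^-1 = 2 * s * (s * ln (1 / s)).
  rewrite -[in LHS](sqr_sqrtr (ltW x0)) -/s expr2 invfM lnM ?posrE ?invr_gt0 //.
  by rewrite div1r; ring.
have := mul_ln_div_le (ltW s0) ler01 (fun _ => ltr01).
rewrite -(ler_pM2l (_ : 0 < 2 * s)) ?mulr_gt0 // => /le_trans; apply.
by rewrite -[leRHS]mulr1 ler_pM2l ?mulr_gt0 // lerBlDr lerDl ltW.
Qed.

Lemma log_sum_le (I : finType) (D : pred I) (a b : I -> R) :
  (forall i, D i -> 0 <= a i) -> (forall i, D i -> 0 <= b i) ->
  (forall i, D i -> 0 < a i -> 0 < b i) ->
  \sum_(i | D i) a i * ln (b i / a i) <=
  (\sum_(i | D i) a i) * ln ((\sum_(i | D i) b i) / \sum_(i | D i) a i).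
Proof.
move=> a0 b0 ab; set A := \sum_(i | D i) a i; set B := \sum_(i | D i) b i.
have [A0|/eqP/(psumr_neq0P a0)[j /andP[Dj aj]]] := eqVneq A 0.
  by rewrite A0 mul0r big1 // => i Di; rewrite (psumr_eq0P a0 A0) ?mul0r.
have A0 : 0 < A by rewrite /A (bigD1 j) //= ltr_wpDr ?sumr_ge0 // => i /andP[/a0].
have B0 : 0 < B by rewrite /B (bigD1 j) //= ltr_wpDr ?ab ?sumr_ge0 // => i /andP[/b0].
have split_ln i : D i -> a i * ln (b i / a i) =
    a i * ln (b i * A / B / a i) + a i * ln (B / A).
  move=> Di; have := a0 i Di; rewrite le_eqVlt => /orP[/eqP <-|ai0].
    by rewrite !mul0r addr0.
  have bi0 := ab i Di ai0.
  rewrite -mulrDr -lnM ?posrE ?divr_gt0 ?mulr_gt0 //; congr (_ * ln _).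
  by field; rewrite !gt_eqF.
apply: (@le_trans _ _ (\sum_(i | D i) (b i * (A / B) - a i + a i * ln (B / A)))).
  apply: ler_sum => i Di; rewrite split_ln // lerD2r mulrA.
  apply: mul_ln_div_le; rewrite ?a0 ?divr_ge0 ?mulr_ge0 ?b0 ?ltW //.
  by move=> /(ab i Di) bi0; rewrite divr_gt0 ?mulr_gt0.
rewrite !big_split /= sumrN -!mulr_suml -/A -/B mulrCA mulfV ?gt_eqF //.
by rewrite mulr1 subrr add0r.
Qed.

Definition marg (U V : finType) (p : U -> V -> R) v := \sum_u p u v.

(* Terms with [p u v = 0] vanish, whatever junk value [ln] takes there. *)
Definition centropy (U V : finType) (p : U -> V -> R) :=
  \sum_u \sum_v p u v * ln (marg p v / p u v).

Lemma le_marg (U V : finType) (p : U -> V -> R) u v :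
  (forall u v, 0 <= p u v) -> p u v <= marg p v.
Proof. by move=> p0; rewrite /marg (bigD1 u) //= lerDl sumr_ge0. Qed.

Lemma centropy_ge0 (U V : finType) (p : U -> V -> R) :
  (forall u v, 0 <= p u v) -> 0 <= centropy p.
Proof.
move=> p0; apply: sumr_ge0 => u _; apply: sumr_ge0 => v _.
have := p0 u v; rewrite le_eqVlt => /orP[/eqP <-|puv]; first by rewrite mul0r.
by rewrite mulr_ge0 ?ln_ge0 // ler_pdivlMr // mul1r le_marg.
Qed.

Lemma centropy_le_coarsen (U V W : finType) (p : U -> W -> R) (g : W -> V) :
  (forall u z, 0 <= p u z) ->
  centropy p <= centropy (fun u v => \sum_(z | g z == v) p u z).
Proof.
move=> p0; apply: ler_sum => u _.
rewrite (partition_big g predT) //=; apply: ler_sum => v _.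
have -> : marg (fun u v => \sum_(z | g z == v) p u z) v =
          \sum_(z | g z == v) marg p z by rewrite /marg exchange_big.
apply: log_sum_le => z _ => [||pz]; rewrite ?p0 ?sumr_ge0 //.
exact: lt_le_trans pz (le_marg _ _ p0).
Qed.

Lemma sum_exchange_pair (U V : finType) (D : U -> V -> bool) (f : U -> V -> R) :
  \sum_v \sum_(u | D u v) f u v = \sum_(x : U * V | D x.1 x.2) f x.1 x.2.
Proof. by rewrite (exchange_big_dep predT) //= pair_big_dep. Qed.

Section DeterministicFunction.
Context (U V Q : finType) (p : U -> V -> R) (F : U -> V -> Q)
  (good : U -> V -> bool).
Hypothesis p_ge0 : forall u v, 0 <= p u v.
Hypothesis p_sum1 : \sum_u \sum_v p u v = 1.
Hypothesis F_inj_good :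
  forall v u u', good u v -> good u' v -> F u v = F u' v -> u = u'.

Definition push_joint r v := \sum_(u | F u v == r) p u v.

Let fiber u v := push_joint (F u v) v.

Definition bad_mass := \sum_(x : U * V | ~~ good x.1 x.2) p x.1 x.2.

Lemma marg_push_joint v : marg push_joint v = marg p v.
Proof.
rewrite /marg /push_joint (exchange_big_dep predT) //=; apply: eq_bigr => u _.
by rewrite (big_pred1 (F u v)) // => r; rewrite eq_sym.
Qed.

Lemma le_fiber u v : p u v <= fiber u v.
Proof. by rewrite /fiber /push_joint (bigD1 u) //= lerDl sumr_ge0. Qed.

Lemma fiber_le_marg u v : fiber u v <= marg p v.
Proof.
rewrite /fiber /push_joint /marg [leRHS](bigID (fun u' => F u' v == F u v)) /=.
by rewrite lerDl sumr_ge0.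
Qed.

Lemma centropy_push_gap :
  centropy p - centropy push_joint = \sum_u \sum_v p u v * ln (fiber u v / p u v).
Proof.
have -> : centropy push_joint = \sum_u \sum_v p u v * ln (marg p v / fiber u v).
  rewrite /centropy exchange_big [RHS]exchange_big; apply: eq_bigr => v _.
  rewrite [RHS](partition_big (F^~ v) predT) //=; apply: eq_bigr => r _.
  rewrite marg_push_joint {1}/push_joint mulr_suml.
  by apply: eq_bigr => u /eqP Fu; rewrite /fiber Fu.
rewrite /centropy -sumrB; apply: eq_bigr => u _; rewrite -sumrB.
apply: eq_bigr => v _; have := p_ge0 u v; rewrite le_eqVlt => /orP[/eqP <-|p0].
  by rewrite !mul0r subr0.
have f0 := lt_le_trans p0 (le_fiber u v).
have m0 := lt_le_trans f0 (fiber_le_marg u v).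
rewrite -mulrBr -ln_div ?posrE ?divr_gt0 //; congr (_ * ln _).
by field; rewrite !gt_eqF.
Qed.

(* A fiber of [F^~ v] contains at most one good point, so the mass it carries
   besides a good [u] is bad, and each bad point is counted at most once. *)
Lemma gap_good_le v :
  \sum_(u | good u v) p u v * ln (fiber u v / p u v) <= \sum_(u | ~~ good u v) p u v.
Proof.
apply: (@le_trans _ _ (\sum_(u | good u v)
    \sum_(u' | ~~ good u' v && (F u' v == F u v)) p u' v)).
  apply: ler_sum => u gu.
  have -> : \sum_(u' | ~~ good u' v && (F u' v == F u v)) p u' v = fiber u v - p u v.
    rewrite /fiber /push_joint [in RHS](bigD1 u) //= addrAC subrr add0r.
    apply: eq_bigl => u'.
    case gu' : (good u' v) => /=.
      by apply/esym/negbTE/andP => -[/eqP /(F_inj_good gu' gu) ->]; rewrite eqxx.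
    have u'u : u' != u by apply: contraFneq gu' => ->.
    by rewrite u'u andbT.
  apply: mul_ln_div_le; rewrite ?p_ge0 ?(le_trans (p_ge0 u v) (le_fiber u v)) //.
  by move/lt_le_trans; apply; exact: le_fiber.
rewrite (exchange_big_dep (fun u' => ~~ good u' v)) /=; last by move=> u u' _ /andP[].
apply: ler_sum => u' bu'; rewrite sumr_const.
have : (#|[pred u | good u v && (~~ good u' v && (F u' v == F u v))]| <= 1)%N.
  apply/card_le1_eqP => u1 u2; rewrite !inE.
  move=> /andP[g1 /andP[_ /eqP e1]] /andP[g2 /andP[_ /eqP e2]].
  by apply: esym (F_inj_good g1 g2 _); rewrite -e1 -e2.
by case: #|_| => [|[|]] //= _; rewrite ?mulr0n ?p_ge0.
Qed.

(* The log-sum inequality collapses the bad terms into [e ln (B / e)] with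
   [e <= B <= #|U|], and [e ln (1 / e) <= 2 sqrt e]. *)
Lemma gap_bad_le :
  \sum_(x : U * V | ~~ good x.1 x.2) p x.1 x.2 * ln (fiber x.1 x.2 / p x.1 x.2) <=
  bad_mass * ln #|U|%:R + 2 * Num.sqrt bad_mass.
Proof.
rewrite /bad_mass; set e := \sum_(x : U * V | ~~ good x.1 x.2) p x.1 x.2.
set B := \sum_(x : U * V | ~~ good x.1 x.2) marg p x.2.
apply: (@le_trans _ _ (\sum_(x : U * V | ~~ good x.1 x.2)
    p x.1 x.2 * ln (marg p x.2 / p x.1 x.2))).
  apply: ler_sum => -[u v] _ /=; have := p_ge0 u v.
  rewrite le_eqVlt => /orP[/eqP <-|p0]; first by rewrite !mul0r.
  have f0 := lt_le_trans p0 (le_fiber u v).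
  have m0 := lt_le_trans f0 (fiber_le_marg u v).
  rewrite ler_wpM2l ?p_ge0 // ler_ln ?posrE ?divr_gt0 //.
  by rewrite ler_pM2r ?invr_gt0 ?fiber_le_marg.
apply: le_trans (log_sum_le _ _ _) _ => [x _|x _|x _ px|].
- exact: p_ge0.
- by apply: sumr_ge0 => u _; exact: p_ge0.
- exact: lt_le_trans px (le_marg _ _ p_ge0).
rewrite -/e -/B; have e0 : 0 <= e by rewrite sumr_ge0.
move: e0; rewrite le_eqVlt => /orP[/eqP <-|e0].
  by rewrite sqrtr0 !mul0r mulr0 addr0.
have eB : e <= B by apply: ler_sum => x _; exact: le_marg.
have BU : B <= #|U|%:R.
  rewrite [leRHS](_ : _ = \sum_(x : U * V) marg p x.2).
    rewrite [leRHS](bigID (fun x => ~~ good x.1 x.2)) /= lerDl.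
    by apply: sumr_ge0 => x _; rewrite sumr_ge0.
  rewrite -(pair_big predT predT (fun _ v => marg p v)) /=.
  by under eq_bigr do rewrite /marg -exchange_big p_sum1; rewrite sumr_const.
have B0 := lt_le_trans e0 eB; have U0 := lt_le_trans B0 BU.
apply: (@le_trans _ _ (e * ln (#|U|%:R / e))).
  by rewrite ler_wpM2l ?(ltW e0) // ler_ln ?posrE ?divr_gt0 // ler_pM2r ?invr_gt0.
rewrite lnM ?posrE ?invr_gt0 // mulrDr lerD2l.
exact: mul_lnV_le_sqrt (ltW e0).
Qed.

Lemma centropy_push_gap_bound :
  0 <= centropy p - centropy push_joint <=
  bad_mass * (1 + ln #|U|%:R) + 2 * Num.sqrt bad_mass.
Proof.
rewrite centropy_push_gap; apply/andP; split.
  apply: sumr_ge0 => u _; apply: sumr_ge0 => v _; have := p_ge0 u v.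
  rewrite le_eqVlt => /orP[/eqP <-|p0]; first by rewrite mul0r.
  by rewrite mulr_ge0 ?(ltW p0) ?ln_ge0 // ler_pdivlMr // mul1r le_fiber.
rewrite pair_big (bigID (fun x => good x.1 x.2)) /=.
have good_le : \sum_(x : U * V | good x.1 x.2)
    p x.1 x.2 * ln (fiber x.1 x.2 / p x.1 x.2) <= bad_mass.
  rewrite -(sum_exchange_pair good (fun u v => p u v * ln (fiber u v / p u v))).
  rewrite /bad_mass -(sum_exchange_pair (fun u v => ~~ good u v) p).
  by apply: ler_sum => v _; exact: gap_good_le.
have := gap_bad_le; lra.
Qed.

End DeterministicFunction.

End ConditionalEntropy.

Lemma ln2_gt0 (R : realType) : 0 < ln (2 : R).
Proof. by rewrite ln_gt0 // ltr1n. Qed.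

Definition fano_bound (R : realType) (c e : R) :=
  (e * (1 + ln c) + 2 * Num.sqrt e) / ln 2.

Lemma cvg_fano_bound (R : realType) (c : R) (e : R^nat) :
  e @ \oo --> 0 -> (fun n => fano_bound c (e n)) @ \oo --> 0.
Proof.
move=> e0; rewrite (_ : 0 = fano_bound c 0); last first.
  by rewrite /fano_bound sqrtr0 mulr0 mul0r addr0 mul0r.
apply: cvgMr_tmp; apply: cvgD; first exact: cvgMr_tmp.
by apply: cvgMl_tmp; exact: (continuous_cvg _ (@sqrt_continuous R 0)).
Qed.

Section EntropyOfRandomVariables.
Context (d : measure_display) (T : measurableType d) (R : realType)
  (P : probability T R).
Local Notation pr := (pr P).

Definition joint (U V : finType) (Y : T -> U) (Z : T -> V) u v :=
  pr [set w | Y w = u /\ Z w = v].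

Section Pair.
Context (U V : finType) (Y : T -> U) (Z : T -> V).
Hypotheses (mY : finrv Y) (mZ : finrv Z).

Lemma joint_ge0 u v : 0 <= joint Y Z u v.
Proof. exact: pr_ge0. Qed.

Lemma pr_marg v : pr [set w | Z w = v] = marg (joint Y Z) v.
Proof.
have := prI_preimage_sum P mY predT (mZ v).
rewrite (_ : _ `&` _ = [set w | Z w = v]) => [->|]; last by apply/seteqP; split.
by apply: eq_bigr => u _; congr pr; apply/seteqP; split => w [].
Qed.

Lemma sum_joint : \sum_u \sum_v joint Y Z u v = 1.
Proof.
rewrite -(sum_pr_finrv P (finrv_pair mY mZ)) pair_big /=.
by apply: eq_bigr => -[u v] _; congr pr; apply/seteqP; split => w /= [-> ->].
Qed.

Lemma condHE : condH P Y Z = centropy (joint Y Z) / ln 2.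
Proof.
rewrite /condH /centropy mulr_suml -sumrN; apply: eq_bigr => u _.
rewrite mulr_suml -sumrN; apply: eq_bigr => v _ /=.
rewrite pr_marg -/(joint Y Z u v) /log2.
have := joint_ge0 u v; rewrite le_eqVlt => /orP[/eqP <-|p0].
  by rewrite eqxx !mul0r oppr0.
have m0 := lt_le_trans p0 (le_marg u v joint_ge0).
by rewrite gt_eqF // !ln_div ?posrE //; ring.
Qed.

Lemma condH_ge0 : 0 <= condH P Y Z.
Proof.
by rewrite condHE divr_ge0 ?centropy_ge0 ?(ltW (ln2_gt0 R)) //; exact: joint_ge0.
Qed.

End Pair.

Lemma condH_le_comp (U V W : finType) (Y : T -> U) (Z : T -> V) (g : V -> W) :
  finrv Y -> finrv Z -> condH P Y Z <= condH P Y (g \o Z).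
Proof.
move=> mY mZ; have mgZ := finrv_comp g mZ.
rewrite !condHE // ler_pM2r ?invr_gt0 ?ln2_gt0 //.
rewrite [X in _ <= centropy X](_ : _ = fun u x => \sum_(v | g v == x) joint Y Z u v).
  by apply: centropy_le_coarsen; exact: joint_ge0.
apply/funext => u; apply/funext => x; rewrite /joint.
have := prI_preimage_sum P mZ (fun v => g v == x) (mY u).
rewrite (_ : _ `&` _ = [set w | Y w = u /\ g (Z w) = x]) => [->|].
  by apply: eq_bigr => v _; congr pr; apply/seteqP; split => w /= [].
by apply/seteqP; split => w /= [-> /eqP].
Qed.

Lemma condH_map_gap (U V Q : finType) (Y : T -> U) (Z : T -> V)
    (F : U -> V -> Q) (good : U -> V -> bool) :
  finrv Y -> finrv Z ->
  (forall v u u', good u v -> good u' v -> F u v = F u' v -> u = u') ->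
  0 <= condH P Y Z - condH P (fun w => F (Y w) (Z w)) Z <=
    fano_bound #|U|%:R (pr [set w | ~~ good (Y w) (Z w)]).
Proof.
move=> mY mZ F_inj.
have mFYZ : finrv (fun w => F (Y w) (Z w)).
  exact: finrv_comp (fun x => F x.1 x.2) (finrv_pair mY mZ).
have joint_map : joint (fun w => F (Y w) (Z w)) Z = push_joint (joint Y Z) F.
  apply/funext => r; apply/funext => v; rewrite /joint /push_joint.
  have := prI_preimage_sum P mY (fun u => F u v == r) (mZ v).
  rewrite (_ : _ `&` _ = [set w | F (Y w) (Z w) = r /\ Z w = v]) => [->|].
    by apply: eq_bigr => u _; congr pr; apply/seteqP; split => w /= [].
  by apply/seteqP; split => w /= [<-] => [/eqP <-|->].
have bad_pr : pr [set w | ~~ good (Y w) (Z w)] = bad_mass (joint Y Z) good.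
  rewrite (pr_preimage_sum P (finrv_pair mY mZ) (fun x => ~~ good x.1 x.2)).
  by apply: eq_bigr => -[u v] _; congr pr; apply/seteqP; split => w /= [-> ->].
rewrite /fano_bound !condHE // -mulrBl joint_map bad_pr; have ln2 := ln2_gt0 R.
have /andP[gap0 gap_le] :=
  centropy_push_gap_bound (joint_ge0 Y Z) (sum_joint mY mZ) F_inj.
by rewrite divr_ge0 ?(ltW ln2) //= ler_pM2r ?invr_gt0.
Qed.

End EntropyOfRandomVariables.

Lemma sum_nat_count (a : pred nat) n : (\sum_(i < n) a i)%N = count a (iota 0 n).
Proof.
by rewrite -(big_mkord xpredT (fun i => nat_of_bool (a i))) /index_iota subn0
  -sumn_count sumnE big_map.
Qed.

Section Ranks.
Context (N : nat).
Implicit Types (a : 'I_N) (v u : seq 'I_N).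

Fixpoint ranks v u : seq nat :=
  if u is a :: u' then
    count (fun x : 'I_N => x <= a)%N (rcons v a) :: ranks (rcons v a) u'
  else [::].

Fixpoint all_seen v u : bool :=
  if u is a :: u' then (a \in v) && all_seen (rcons v a) u' else true.

Lemma count_le_lt v a a' : (a < a')%N -> a' \in v ->
  (count (fun x : 'I_N => x <= a) v < count (fun x : 'I_N => x <= a') v)%N.
Proof.
move=> aa'; elim: v => // x v IHv; rewrite inE /= => /orP[/eqP <-|a'v].
  rewrite leqnn (leqNgt a' a) aa' add1n ltnS.
  by apply: sub_count => y /leq_trans; apply; exact: ltnW.
rewrite -addnS; apply: leq_add (IHv a'v); case: (leqP x a) => // xa.
by rewrite (leq_trans xa (ltnW aa')).
Qed.

Lemma count_le_inj v a a' : a \in v -> a' \in v ->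
  count (fun x : 'I_N => x <= a)%N v = count (fun x : 'I_N => x <= a')%N v -> a = a'.
Proof.
move=> av a'v e; apply: val_inj; case: (ltngtP a a') => // [aa'|a'a].
  by have := count_le_lt aa' a'v; rewrite e ltnn.
by have := count_le_lt a'a av; rewrite e ltnn.
Qed.

Lemma size_ranks v u : size (ranks v u) = size u.
Proof. by elim: u v => //= a u IHu v; rewrite IHu. Qed.

Lemma ranks_le v u : all (fun r => r <= size v + size u)%N (ranks v u).
Proof.
elim: u v => //= a u IHu v; apply/andP; split.
  by apply: leq_trans (count_size _ _) _; rewrite size_rcons addnS ltnS leq_addr.
by move: (IHu (rcons v a)); rewrite size_rcons addSnnS.
Qed.

Lemma ranks_inj v u u' : all_seen v u -> all_seen v u' ->
  ranks v u = ranks v u' -> u = u'.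
Proof.
elim: u v u' => [|a u IHu] v [|a' u'] //= /andP[av su] /andP[a'v su'] [ea eu].
have aa' : a = a'.
  apply: count_le_inj av a'v _; move: ea.
  by rewrite -!cats1 !count_cat /= !leqnn => /addIn.
by move: su' eu; rewrite -aa' => su' /(IHu _ _ su su') ->.
Qed.

Definition rank_tuple k l (v : k.-tuple 'I_N) (u : l.-tuple 'I_N) :
    l.-tuple 'I_(k + l).+1 :=
  [tuple inord (nth 0 (ranks v u) i) | i < l].

Lemma rank_tuple_inj k l (v : k.-tuple 'I_N) (u u' : l.-tuple 'I_N) :
  all_seen v u -> all_seen v u' -> rank_tuple v u = rank_tuple v u' -> u = u'.
Proof.
move=> su su' e; apply/val_inj/(ranks_inj su su').
apply: (@eq_from_nth _ 0); rewrite ?size_ranks ?size_tuple // => i il.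
have rank_lt (w : l.-tuple 'I_N) : (nth 0 (ranks v w) i < (k + l).+1)%N.
  have /all_nthP := ranks_le v w; rewrite !size_tuple ltnS; apply.
  by rewrite size_ranks size_tuple.
have := congr1 (fun t => val (tnth t (Ordinal il))) e.
by rewrite !tnth_mktuple /= !inordK.
Qed.

Lemma map_iotaS (f : nat -> 'I_N) k :
  rcons [seq f i | i <- iota 0 k] (f k) = [seq f i | i <- iota 0 k.+1].
Proof. by rewrite -[k.+1]addn1 iotaD map_cat cats1. Qed.

Lemma ranks_map (f : nat -> 'I_N) k l :
  ranks [seq f i | i <- iota 0 k] [seq f i | i <- iota k l] =
  [seq count (fun x : 'I_N => x <= f t)%N (rcons [seq f i | i <- iota 0 t] (f t))
    | t <- iota k l].
Proof. by elim: l k => //= l IHl k; rewrite [in ranks _ _]map_iotaS IHl. Qed.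

Lemma all_seen_map (f : nat -> 'I_N) k l :
  all_seen [seq f i | i <- iota 0 k] [seq f i | i <- iota k l] =
  all (fun t => f t \in [seq f i | i <- iota 0 t]) (iota k l).
Proof. by elim: l k => //= l IHl k; rewrite map_iotaS IHl. Qed.

End Ranks.

Section StationarySource.
Context (d : measure_display) (T : measurableType d) (R : realType)
  (P : probability T R) (N : nat) (X : nat -> T -> 'I_N).
Hypotheses (srcX : is_source X) (statX : stationary P X).
Local Notation pr := (pr P).
Local Notation word := (word X).

Lemma word_val s n w : val (word s n w) = [seq X i w | i <- iota s n].
Proof. by rewrite /= -{2}[s]addn0 iotaDl -map_comp -val_enum_ord -map_comp. Qed.

Lemma word_cat s k l w : word s k w ++ word (s + k) l w = word s (k + l) w.
Proof. by rewrite !word_val -map_cat -iotaD. Qed.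

Lemma finrv_word s n : finrv (word s n).
Proof.
move=> v; rewrite (_ : [set w | _] =
    \bigcap_(i in [set: 'I_n]) [set w | X (s + i) w = tnth v i]).
  by apply: fin_bigcap_measurable => // i _; exact: srcX.
apply/seteqP; split => w /=; first by move=> <- i _; rewrite tnth_mktuple.
by move=> wv; apply: eq_from_tnth => i; rewrite tnth_mktuple; exact: wv.
Qed.
Arguments finrv_word : clear implicits.

Lemma pr_word_shift s n (Q : pred (n.-tuple 'I_N)) :
  pr [set w | Q (word s n w)] = pr [set w | Q (word 0 n w)].
Proof.
rewrite !(pr_preimage_sum P (finrv_word _ _)); apply: eq_bigr => v _.
by rewrite /Defs.pr statX.
Qed.

Lemma joint_word_shift s k l :
  joint P (word (s + k) l) (word s k) = joint P (word k l) (word 0 k).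
Proof.
apply/funext => u; apply/funext => v; rewrite /joint.
have catE s' : [set w | word (s' + k) l w = u /\ word s' k w = v] =
    [set w | val (word s' (k + l) w) == val v ++ val u].
  apply/seteqP; split => w /=; rewrite -word_cat eqseq_cat ?size_tuple //.
    by move=> [-> ->]; rewrite !eqxx.
  by move=> /andP[/eqP/val_inj -> /eqP/val_inj ->].
rewrite catE -[k in word k l]add0n catE.
exact: pr_word_shift _ (fun x => val x == val v ++ val u).
Qed.

Lemma condH_word_nonincr k l :
  condH P (word k.+1 l) (word 0 k.+1) <= condH P (word k l) (word 0 k).
Proof.
have behead_word : @behead_tuple k.+1 _ \o word 0 k.+1 = word 1 k.
  apply/funext => w; apply: val_inj.
  by rewrite -[LHS]/(behead (word 0 k.+1 w)) !word_val.
apply: le_trans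
  (condH_le_comp P (@behead_tuple k.+1 _) (finrv_word _ _) (finrv_word _ _)) _.
rewrite behead_word !condHE; try exact: finrv_word.
by have := joint_word_shift 1 k l; rewrite add1n => ->.
Qed.

Definition new_letter t := [set w | X t w \notin [seq X i w | i <- iota 0 t]].

Definition new_at n (x : n.-tuple 'I_N) (t : 'I_n) := tnth x t \notin take t x.

Lemma new_at_word s n (t : 'I_n) w :
  new_at (word s n w) t = (X (s + t) w \notin [seq X i w | i <- iota s t]).
Proof.
rewrite /new_at tnth_mktuple word_val -map_take take_iota.
by rewrite (minn_idPl (ltnW (ltn_ord t))).
Qed.

Lemma new_letter_word n (t : 'I_n) : new_letter t = [set w | new_at (word 0 n w) t].
Proof. by apply/seteqP; split => w /=; rewrite new_at_word. Qed.

Lemma measurable_new_letter t : measurable (new_letter t).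
Proof.
rewrite (new_letter_word (@ord_max t)).
exact: finrv_preimage (finrv_word _ _) (fun x => new_at x ord_max).
Qed.

Lemma pr_new_letter_nonincr : nonincreasing_seq (pr \o new_letter).
Proof.
apply/nonincreasing_seqP => t /=.
have sub : new_letter t.+1 `<=` [set w | new_at (word 1 t.+1 w) ord_max].
  move=> w /=; rewrite new_at_word add1n; apply: contra => /mapP[i].
  by rewrite mem_iota => /andP[_ it] ->; apply: map_f; rewrite mem_iota.
apply: le_trans (pr_le P (measurable_new_letter _)
  (finrv_preimage (finrv_word _ _) (fun x => new_at x ord_max)) sub) _.
rewrite (pr_word_shift _ (fun x => new_at x ord_max)).
by rewrite (new_letter_word (@ord_max t)).
Qed.

Lemma card_new_at_le n (x : n.-tuple 'I_N) : (#|[pred t | new_at x t]| <= N)%N.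
Proof.
rewrite -[N in (_ <= N)%N]card_ord; apply: (leq_card_in (tnth x)).
have new_neq (t1 t2 : 'I_n) : (t1 < t2)%N -> new_at x t2 -> tnth x t1 != tnth x t2.
  move=> t12 /negP x2; apply/eqP => x12; apply: x2; rewrite -x12.
  rewrite (tnth_nth (tnth x t1)) -(nth_take _ t12) mem_nth //.
  by rewrite size_take size_tuple ltn_ord.
move=> t1 t2 x1 x2 x12; apply/val_inj/eqP.
by case: ltngtP => // t12; [move: (new_neq _ _ t12 x2)|move: (new_neq _ _ t12 x1)];
  rewrite x12 eqxx.
Qed.

Lemma sum_pr_new_letter_le n : \sum_(t < n) pr (new_letter t) <= N%:R.
Proof.
under eq_bigr do rewrite new_letter_word.
exact: (sum_pr_preimage_le P (finrv_word 0 n) (@card_new_at_le n)).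
Qed.

Lemma pr_new_letter_le t : pr (new_letter t) <= N%:R / t.+1%:R.
Proof.
rewrite ler_pdivlMr ?ltr0Sn // mulr_natr -[t.+1 in leLHS]card_ord -sumr_const.
apply: le_trans (sum_pr_new_letter_le t.+1); apply: ler_sum => s _.
by apply: pr_new_letter_nonincr; rewrite -ltnS.
Qed.

Lemma rank_wordE k l :
  rank_word X k l = fun w => rank_tuple (word 0 k w) (word k l w).
Proof.
apply/funext => w; apply: eq_from_tnth => i; rewrite !tnth_mktuple; congr inord.
rewrite !word_val ranks_map (nth_map 0) ?size_iota // nth_iota //.
by rewrite map_iotaS /rank (sum_nat_count (fun j => X j w <= X (k + i) w)%N) count_map.
Qed.

Lemma new_letter_of_not_all_seen k l w : ~~ all_seen (word 0 k w) (word k l w) ->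
  exists2 j, (j < l)%N & new_letter (k + j) w.
Proof.
rewrite !word_val all_seen_map -has_predC => /hasP[t].
rewrite mem_iota => /andP[kt tkl] tnew.
by exists (t - k)%N; rewrite ?ltn_subLR ?subnKC.
Qed.

Lemma pr_not_all_seen_le k l :
  pr [set w | ~~ all_seen (word 0 k w) (word k l w)] <= l%:R * (N%:R / k.+1%:R).
Proof.
have mbad : measurable [set w | ~~ all_seen (word 0 k w) (word k l w)].
  exact: finrv_preimage (finrv_pair (finrv_word _ _) (finrv_word _ _))
    (fun x => ~~ all_seen x.1 x.2).
have bad_sub : [set w | ~~ all_seen (word 0 k w) (word k l w)] `<=`
    \big[setU/set0]_(j < l) new_letter (k + j).
  move=> w /new_letter_of_not_all_seen[j jl fj].
  by rewrite -(bigcup_mkord l (fun j => new_letter (k + j))); exists j.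
apply: (@le_trans _ _ (\sum_(j < l) pr (new_letter (k + j)))).
  rewrite -lee_fin -sumEFin -(prE P mbad).
  under eq_bigr do rewrite -(prE P (measurable_new_letter _)).
  apply: (content_subadditive P (F := fun j => new_letter (k + j))) => // j _.
  exact: measurable_new_letter.
rewrite mulr_natl -[X in _ *+ X]card_ord -sumr_const.
apply: ler_sum => j _; apply: le_trans (pr_new_letter_le k).
by apply: pr_new_letter_nonincr; rewrite leq_addr.
Qed.

Lemma pr_not_all_seen_cvg0 l :
  (fun k => pr [set w | ~~ all_seen (word 0 k w) (word k l w)]) @ \oo --> 0.
Proof.
apply: (@squeeze_cvgr _ _ _ _ (cst 0) (fun k => l%:R * N%:R * harmonic k)).
- apply: nearW => k; rewrite pr_ge0 /= /harmonic /= -mulrA.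
  exact: pr_not_all_seen_le.
- exact: cvg_cst.
- by rewrite -(mulr0 (l%:R * N%:R)); apply: cvgMl_tmp; exact: cvg_harmonic.
Qed.

Lemma condH_rank_gap k l :
  0 <= condH P (word k l) (word 0 k) - condH P (rank_word X k l) (word 0 k) <=
  fano_bound #|{: l.-tuple 'I_N}|%:R
    (pr [set w | ~~ all_seen (word 0 k w) (word k l w)]).
Proof.
rewrite rank_wordE.
exact: (condH_map_gap P (finrv_word k l) (finrv_word 0 k)
  (F := fun u v => rank_tuple v u) (good := fun u v => all_seen v u)
  (@rank_tuple_inj N k l)).
Qed.

End StationarySource.

Theorem lemma1 (d : measure_display) (T : measurableType d) (R : realType)
  (P : probability T R) (N : nat) (X : nat -> T -> 'I_N) :
  is_source X -> stationary P X -> ergodic P X ->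
  forall l : nat, (1 <= l)%N ->
  exists L : R,
    (fun k : nat => condH P (word X k l) (word X 0 k)) @ \oo --> L /\
    (fun k : nat => condH P (rank_word X k l) (word X 0 k)) @ \oo --> L.
Proof.
move=> srcX statX _ l _.
pose HS k := condH P (word X k l) (word X 0 k).
have HS_cvg : HS @ \oo --> inf (range HS).
  apply: nonincreasing_cvgn.
    by apply/nonincreasing_seqP => k; exact: condH_word_nonincr.
  by exists 0 => _ [k _ <-]; apply: condH_ge0; exact: finrv_word.
exists (inf (range HS)); split => //.
pose gap k := HS k - condH P (rank_word X k l) (word X 0 k).
have gap_cvg : gap @ \oo --> 0.
  apply: (@squeeze_cvgr _ _ _ _ (cst 0)
    (fun k => fano_bound #|{: l.-tuple 'I_N}|%:R
      (pr P [set w | ~~ all_seen (word X 0 k w) (word X k l w)]))).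
  - by apply: nearW => k; exact: condH_rank_gap.
  - exact: cvg_cst.
  - exact/cvg_fano_bound/pr_not_all_seen_cvg0.
have -> : (fun k => condH P (rank_word X k l) (word X 0 k)) = HS - gap.
  by apply/funext => k; rewrite /gap /= opprB addrC subrK.
by rewrite -[inf _]subr0; apply: cvgB.
Qed.
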